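(* Let $A,B\in\mathcal{B}_F$ and $1\le p\le\infty$. Then $d_p(\pi(A),\pi(B))\le 2\,d_p(A,B)$.
   Context: A persistence barcode is a finite multiset of intervals $[x,y]$, $x\le y$; $\mathcal{B}_F$ is the set of barcodes all of whose intervals have finite endpoints. The projection $\pi$ sends $A=\{[x_i^a,y_i^a]\}$ to $\pi(A)=\{[0,y_i^a-x_i^a]\}$. $p$-th Wasserstein distance: pad the smaller barcode with zero-length intervals $[t,t]$ until both have $n_{\max}=\max\{n_a,n_b\}$ intervals; $d_p(A,B)=\big(\min_\gamma\sum_i\max\{|x_i^a-x^b_{\gamma(i)}|^p,|y_i^a-y^b_{\gamma(i)}|^p\}\big)^{1/p}$ for $p<\infty$, $d_\infty(A,B)=\min_\gamma\max_i\max\{|x_i^a-x^b_{\gamma(i)}|,|y_i^a-y^b_{\gamma(i)}|\}$, minima over bijections $\gamma$ (and paddings). *)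

From HB Require Import structures.
From mathcomp Require Import all_boot all_order all_algebra all_fingroup.
From mathcomp Require Import all_classical all_reals.
From mathcomp Require Import ereal exp.
Set Implicit Arguments. Unset Strict Implicit. Unset Printing Implicit Defensive.
Import Order.TTheory GRing.Theory Num.Theory.
Local Open Scope ring_scope.

Section Barcodes.
Variable R : realType.

(* An interval [x,y] is a pair (x,y); a barcode in B_F is a finite multiset
   of intervals with finite endpoints and x <= y, represented as a list. *)
Definition barcode (A : seq (R * R)) : bool := all (fun u => u.1 <= u.2) A.

Definition bproj (A : seq (R * R)) : seq (R * R) :=
  [seq (0, u.2 - u.1) | u <- A].

Definition nmax (A B : seq (R * R)) : nat := maxn (size A) (size B).

Definition pad (A : seq (R * R)) (ts : seq R) : seq (R * R) :=
  A ++ [seq (t, t) | t <- ts].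

Definition pcost (p : R) (u v : R * R) : R :=
  Num.max (`|u.1 - v.1| `^ p) (`|u.2 - v.2| `^ p).
Definition icost (u v : R * R) : R :=
  Num.max `|u.1 - v.1| `|u.2 - v.2|.

Definition costs_fin (p : R) (A B : seq (R * R)) : set R :=
  [set c | exists (ta tb : seq R) (g : 'S_(nmax A B)),
     [/\ size ta = (nmax A B - size A)%N, size tb = (nmax A B - size B)%N &
       c = \sum_(i < nmax A B)
             pcost p (nth (0,0) (pad A ta) i) (nth (0,0) (pad B tb) (g i))]].

Definition costs_inf (A B : seq (R * R)) : set R :=
  [set c | exists (ta tb : seq R) (g : 'S_(nmax A B)),
     [/\ size ta = (nmax A B - size A)%N, size tb = (nmax A B - size B)%N &
       c = \big[Num.max/0]_(i < nmax A B)
             icost (nth (0,0) (pad A ta) i) (nth (0,0) (pad B tb) (g i))]].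

(* p-th Wasserstein distance, p in [1, +oo] (the -oo branch is never used);
   the minimum is taken as an infimum. *)
Definition dW (p : \bar R) (A B : seq (R * R)) : R :=
  match p with
  | EFin r => (inf (costs_fin r A B)) `^ r^-1
  | +oo%E => inf (costs_inf A B)
  | -oo%E => 0
  end.

End Barcodes.

From HB Require Import structures.
From mathcomp Require Import all_boot all_order all_algebra all_fingroup.
From mathcomp Require Import all_classical all_reals.
From mathcomp Require Import ereal exp.
From mathcomp Require Import ring lra.
Import Order.TTheory GRing.Theory Num.Theory.
Local Open Scope classical_set_scope.
Local Open Scope ring_scope.

(* Under the projection a matched pair [x,y], [x',y'] becomes [0,y-x], [0,y'-x'],
   whose cost |(y-x) - (y'-x')| <= |x-x'| + |y-y'| is at most twice the original
   cost, while padding intervals [t,t] project to [0,0], themselves a valid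
   padding.  Hence every matching of A and B yields a matching of pi(A) and
   pi(B) at most twice as expensive (2^p times for the p-th power sums), and the
   bound passes to the infima. *)

Section Projection.
Variable R : realType.
Implicit Types (r : R) (u v : R * R) (A B : seq (R * R)).

Definition iproj u : R * R := (0, u.2 - u.1).

Lemma icost_iproj u v : icost (iproj u) (iproj v) <= 2 * icost u v.
Proof.
rewrite {1}/icost /= subrr normr0 (max_r (normr_ge0 _)) mulr2n mulrDl mul1r.
rewrite (_ : _ - _ = (u.2 - v.2) - (u.1 - v.1)); last by ring.
by apply: le_trans (ler_normB _ _) _; rewrite addrC lerD // le_max lexx ?orbT.
Qed.

Lemma pcost_icost r u v : 0 <= r -> pcost r u v = icost u v `^ r.
Proof.
move=> r0; rewrite /pcost /icost.
case: (leP `|u.1 - v.1| `|u.2 - v.2|) => h; [apply: max_r | apply: max_l];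
  by apply: ge0_ler_powR => //; rewrite ?nnegrE ?ltW.
Qed.

Lemma pcost_iproj r u v : 0 <= r ->
  pcost r (iproj u) (iproj v) <= 2 `^ r * pcost r u v.
Proof.
move=> r0; rewrite !pcost_icost // -powRM ?le_max ?normr_ge0 //.
by apply: ge0_ler_powR (icost_iproj u v);
  rewrite ?nnegrE ?mulr_ge0 ?le_max ?normr_ge0.
Qed.

Lemma nmax_bproj A B : nmax (bproj A) (bproj B) = nmax A B.
Proof. by rewrite /nmax !size_map. Qed.

Lemma nth_pad_bproj A (ta : seq R) i :
  nth (0, 0) (pad (bproj A) (nseq (size ta) 0)) i = iproj (nth (0, 0) (pad A ta) i).
Proof.
have -> : pad (bproj A) (nseq (size ta) 0) = map iproj (pad A ta).
  rewrite /pad map_cat -map_comp; congr (_ ++ _).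
  by elim: ta => //= t ta ->; rewrite /iproj subrr.
case: (ltnP i (size (pad A ta))) => hi; first exact: nth_map.
by rewrite !nth_default ?size_map // /iproj subrr.
Qed.

Lemma costs_fin_bproj r A B c : 0 <= r -> costs_fin r A B c ->
  exists2 c', costs_fin r (bproj A) (bproj B) c' & c' <= 2 `^ r * c.
Proof.
move=> r0 [ta [tb [g [hta htb ->]]]].
exists (\sum_(i < nmax A B) pcost r (iproj (nth (0, 0) (pad A ta) i))
                                   (iproj (nth (0, 0) (pad B tb) (g i)))).
  exists (nseq (size ta) 0), (nseq (size tb) 0); rewrite nmax_bproj !size_map.
  by exists g; split; rewrite ?size_nseq //; apply: eq_bigr => i _;
    rewrite !nth_pad_bproj.
by rewrite mulr_sumr; apply: ler_sum => i _; apply: pcost_iproj.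
Qed.

Lemma costs_inf_bproj A B c : costs_inf A B c ->
  exists2 c', costs_inf (bproj A) (bproj B) c' & c' <= 2 * c.
Proof.
move=> [ta [tb [g [hta htb ->]]]].
exists (\big[Num.max/0]_(i < nmax A B) icost (iproj (nth (0, 0) (pad A ta) i))
                                   (iproj (nth (0, 0) (pad B tb) (g i)))).
  exists (nseq (size ta) 0), (nseq (size tb) 0); rewrite nmax_bproj !size_map.
  by exists g; split; rewrite ?size_nseq //; apply: eq_bigr => i _;
    rewrite !nth_pad_bproj.
apply: (big_ind2 (fun x y => x <= 2 * y)); last by move=> i _; apply: icost_iproj.
  by rewrite mulr0.
by move=> x1 x2 y1 y2 h1 h2; rewrite maxr_pMr // ge_max le_max h1 le_max h2 orbT.
Qed.

Lemma costs_fin_neq0 r A B : costs_fin r A B !=set0.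
Proof.
eexists; exists (nseq (nmax A B - size A) 0), (nseq (nmax A B - size B) 0), 1%g.
by split; rewrite ?size_nseq.
Qed.

Lemma costs_inf_neq0 A B : costs_inf A B !=set0.
Proof.
eexists; exists (nseq (nmax A B - size A) 0), (nseq (nmax A B - size B) 0), 1%g.
by split; rewrite ?size_nseq.
Qed.

Lemma costs_fin_ge0 r A B : lbound (costs_fin r A B) 0.
Proof.
move=> _ [ta [tb [g [_ _ ->]]]]; apply: sumr_ge0 => i _.
by rewrite /pcost le_max powR_ge0.
Qed.

Lemma costs_inf_ge0 A B : lbound (costs_inf A B) 0.
Proof.
move=> _ [ta [tb [g [_ _ ->]]]]; apply: (big_ind (fun x => 0 <= x)) => //.
  by move=> x y hx _; rewrite le_max hx.
by move=> i _; rewrite /icost le_max normr_ge0.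
Qed.

End Projection.

Lemma inf_le_scale (R : realType) (S T : set R) (k : R) :
  0 < k -> T !=set0 -> has_lbound S ->
  (forall c, T c -> exists2 c', S c' & c' <= k * c) ->
  inf S <= k * inf T.
Proof.
move=> k0 T0 Sb ST; rewrite -ler_pdivrMl //.
apply: lb_le_inf => // c /ST [c' Sc' le_c'].
by rewrite ler_pdivrMl //; apply: le_trans le_c'; apply: ge_inf.
Qed.

Theorem lemma3 (R : realType) (p : \bar R) (A B : seq (R * R)) :
  barcode A -> barcode B -> (1%:E <= p)%E ->
  dW p (bproj A) (bproj B) <= 2 * dW p A B.
Proof.
move=> _ _; case: p => [r||] // hp /=; last first.
  apply: inf_le_scale => //; [exact: costs_inf_neq0 | | exact: costs_inf_bproj].
  by exists 0; apply: costs_inf_ge0.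
have r0 : 0 < r by rewrite lee_fin in hp; lra.
have le_inf : inf (costs_fin r (bproj A) (bproj B)) <= 2 `^ r * inf (costs_fin r A B).
  apply: inf_le_scale; [by rewrite powR_gt0 | exact: costs_fin_neq0 | |].
    by exists 0; apply: costs_fin_ge0.
  by move=> c; apply: costs_fin_bproj; rewrite ltW.
have inf_ge0 A' B' : 0 <= inf (costs_fin r A' B').
  by apply: lb_le_inf; [exact: costs_fin_neq0 | exact: costs_fin_ge0].
apply: le_trans (ge0_ler_powR _ _ _ le_inf) _;
  rewrite ?nnegrE ?invr_ge0 ?mulr_ge0 ?powR_ge0 ?inf_ge0 ?(ltW r0) //.
by rewrite powRM ?powR_ge0 // -powRrM mulfV ?gt_eqF // powRr1.
Qed.
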